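(* Let $X$, $Y$ be Hilbert spaces, and let $E_0\in L(X)$ be self-adjoint, nonnegative and with closed range. Let $A_0:X\supset{\rm dom}\,A_0\to X$ be linear and let $\Gamma\in L({\rm dom}\,A_0,Y)$ be surjective, where ${\rm dom}\,A_0$ is equipped with the graph norm $\|x\|_{{\rm dom}\,A_0}=(\|x\|_X^2+\|A_0x\|_X^2)^{1/2}$. Assume that there exists $\omega\in\mathbb{R}$ such that ${\rm Re}\,((A_0-\omega E_0)x,x)_X\le0$ for all $x\in\ker\Gamma$, and some $\lambda_0>\omega$ such that $\lambda_0E_0-A_0|_{\ker\Gamma}:\ker\Gamma\to X$ is surjective. Moreover assume $\ker E_0\cap\ker A_0\cap\ker\Gamma=\{0\}$. Let $Z=X\times Y$ and define $E\in L(X,Z)$ and $A:X\supset{\rm dom}\,A_0\to Z$ by $Ex=(E_0x,0)$, $Ax=(A_0x,\Gamma x)$. Then $(\omega,\infty)\subseteq\rho(E,A)$ and the left resolvent $R_l(\lambda)=E(A-\lambda E)^{-1}$ fulfills condition $\mathbf{(D_2)}$. If moreover $\ker E_0=\{0\}$, then the right resolvent $R_r(\lambda)=(A-\lambda E)^{-1}E$ fulfills condition $\mathbf{(D_1)}$.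
   Context: $\rho(E,A)=\{\lambda\in\mathbb{C}:\lambda E-A:{\rm dom}\,A\to Z\text{ bijective}\}$; $R_l$ (with values in $L(Z)$) and $R_r$ (with values in $L(X)$) are pseudo-resolvents on $\Omega=\rho(E,A)$, i.e. $\frac{R(\lambda)-R(\mu)}{\mu-\lambda}=R(\lambda)R(\mu)$ for $\lambda\ne\mu$. Condition $\mathbf{(D_k)}$ for a pseudo-resolvent $R:\Omega\to L(V)$ on a Banach space $V$ ($k\ge1$): there exist $\omega'\in\mathbb{R}$, $M>0$ with $[\omega',\infty)\subseteq\Omega$ and $\|R(\lambda)v\|\le\frac{M}{\lambda-\omega'}\|v\|$ for all $\lambda\in(\omega',\infty)$ and $v\in{\rm ran}\,R(\omega')^{k-1}$ (with ${\rm ran}\,R(\omega')^0=V$). *)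

From mathcomp Require Import all_boot all_algebra.
From mathcomp Require Import reals.
From mathcomp Require Export complex.
Import GRing.Theory Num.Theory.
Set Implicit Arguments. Unset Strict Implicit. Unset Printing Implicit Defensive.
Local Open Scope ring_scope.
Local Open Scope complex_scope.

Section Defs.
Variable R : realType.
Local Notation C := R[i].

Section Hilbert.
Variable X : lmodType C.
Variable ip : X -> X -> C.

Definition hnorm (x : X) : R := Num.sqrt (complex.Re (ip x x)).

Definition is_hilbert : Prop :=
  [/\ (forall (a : C) (x y z : X), ip (a *: x + y) z = a * ip x z + ip y z),
      (forall x y : X, ip x y = (ip y x)^*),
      (forall x : X, 0 <= ip x x),
      (forall x : X, ip x x = 0 -> x = 0) &
      (forall u : nat -> X,
         (forall e : R, 0 < e -> exists N, forall m n, (N <= m)%N -> (N <= n)%N ->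
             hnorm (u m - u n) < e) ->
         exists l : X, forall e : R, 0 < e -> exists N, forall n, (N <= n)%N ->
             hnorm (u n - l) < e)].

Definition hclosed (S : X -> Prop) : Prop :=
  forall (u : nat -> X) (l : X), (forall n, S (u n)) ->
    (forall e : R, 0 < e -> exists N, forall n, (N <= n)%N -> hnorm (u n - l) < e) ->
    S l.
End Hilbert.

Definition subspace (X : lmodType C) (D : X -> Prop) : Prop :=
  D 0 /\ forall (a : C) (x y : X), D x -> D y -> D (a *: x + y).

Definition linear_on (X Y : lmodType C) (D : X -> Prop) (f : X -> Y) : Prop :=
  forall (a : C) (x y : X), D x -> D y -> f (a *: x + y) = a *: f x + f y.

Definition znorm (X Y : lmodType C) (ipX : X -> X -> C) (ipY : Y -> Y -> C)
  (z : X * Y) : R := Num.sqrt (hnorm ipX z.1 ^+ 2 + hnorm ipY z.2 ^+ 2).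

Definition in_rho (X Z : lmodType C) (D : X -> Prop) (E A : X -> Z) (l : C) : Prop :=
  (forall z : Z, exists x, D x /\ l *: E x - A x = z) /\
  (forall x1 x2, D x1 -> D x2 -> l *: E x1 - A x1 = l *: E x2 - A x2 -> x1 = x2).

(** Graph of the left resolvent R_l(l) = E (A - l E)^{-1} : Z -> Z
    (a function on Z whenever l \in rho(E,A)). *)
Definition Rl_graph (X Z : lmodType C) (D : X -> Prop) (E A : X -> Z) (l : C)
  (z w : Z) : Prop :=
  exists x, [/\ D x, A x - l *: E x = z & w = E x].

(** Graph of the right resolvent R_r(l) = (A - l E)^{-1} E : X -> X. *)
Definition Rr_graph (X Z : lmodType C) (D : X -> Prop) (E A : X -> Z) (l : C)
  (v w : X) : Prop :=
  D w /\ A w - l *: E w = E v.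

Fixpoint in_ran_pow (V : Type) (T : V -> V -> Prop) (k : nat) (v : V) : Prop :=
  match k with
  | 0 => True
  | k'.+1 => exists u, in_ran_pow T k' u /\ T u v
  end.

Definition cond_D (V : Type) (nv : V -> R) (Omega : C -> Prop)
  (Rg : C -> V -> V -> Prop) (k : nat) : Prop :=
  exists (w' M : R), 0 < M /\
    (forall l : R, w' <= l -> Omega l%:C) /\
    (forall l : R, w' < l -> forall v, in_ran_pow (Rg w'%:C) k.-1 v ->
       forall w, Rg l%:C v w -> nv w <= M / (l - w') * nv v).

End Defs.

(* For l > w put L(l) = l E0 - A0 on ker G and p x = Re (E0 x, x)^(1/2).  Dissipativity
   and the Cauchy-Schwarz inequality for (E0 ., .) give (l - w) p x <= p d whenever
   L(l) x = E0 d.  Hence L(l) is injective (by the kernel condition), and near a point l1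
   where L is onto, L(l) = L(l1) + (l - l1) E0 is inverted by a fixed-point iteration that
   contracts p.  The iteration converges because ran E0 is closed and, by the uniform
   boundedness principle, p y <= c |E0 y|.  Stepping up from l0 reaches every l > w, and
   surjectivity of G then makes l E - A bijective.  The same inequality together with
   |E0 x| <= c p x and p y <= c |E0 y| gives (D_2) for R_l; if E0 is injective it is onto
   (being self-adjoint with closed range), so p is equivalent to the norm and (D_1) holds
   for R_r. *)

From mathcomp Require Import all_boot all_order all_algebra.
From mathcomp Require Import reals complex boolp classical_sets.
From mathcomp Require Import ring lra.
Import GRing.Theory Num.Theory Order.TTheory.
Set Implicit Arguments. Unset Strict Implicit. Unset Printing Implicit Defensive.
Local Open Scope ring_scope.
Local Open Scope complex_scope.

Section ComplexRe.
Variable R : realType.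
Implicit Types (a b : R[i]) (t : R).

Lemma ReD a b : complex.Re (a + b) = complex.Re a + complex.Re b.
Proof. exact: (raddfD (@complex.Re R : Rcomplex R -> R)). Qed.
Lemma ReN a : complex.Re (- a) = - complex.Re a.
Proof. exact: (raddfN (@complex.Re R : Rcomplex R -> R)). Qed.
Lemma ReJ a : complex.Re a^* = complex.Re a.
Proof. by case: a. Qed.
Lemma ReM_real t a : complex.Re (t%:C * a) = t * complex.Re a.
Proof. by case: a => x y /=; rewrite mul0r subr0. Qed.
End ComplexRe.

Section RealFacts.
Variable R : realType.
Implicit Types (a b c e h k q x y : R).

Lemma bernoulli_ineq h n : 0 <= h -> 1 + n%:R * h <= (1 + h) ^+ n.
Proof.
move=> h0; elim: n => [|n IH]; first by rewrite mul0r addr0 expr0.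
rewrite exprS; apply: le_trans (_ : (1 + h) * (1 + n%:R * h) <= _).
  rewrite mulrDl mul1r mulrDr mulr1 -natr1 mulrDl mul1r.
  have : 0 <= h * (n%:R * h) by rewrite !mulr_ge0.
  lra.
by rewrite ler_pM2l // ltr_wpDr.
Qed.

Lemma exprn_lt q e : 0 <= q -> q < 1 -> 0 < e -> exists n, q ^+ n < e.
Proof.
move=> q0 q1 e0; have [->|q_neq0] := eqVneq q 0; first by exists 1%N; rewrite expr1.
set h := q^-1 - 1.
have h_gt0 : 0 < h by rewrite subr_gt0 invf_gt1 // lt_def q_neq0.
have -> : q = (1 + h)^-1 by rewrite addrC subrK invrK.
pose n := Num.Def.archi_bound (e^-1 / h).
have : e^-1 / h < n%:R by apply: archi_boundP; rewrite divr_ge0 // ltW ?invr_gt0.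
rewrite ltr_pdivrMr // => nh.
exists n; rewrite exprVn -invf_plt ?posrE ?exprn_gt0 ?ltr_wpDr ?ltW //.
by apply: lt_le_trans (bernoulli_ineq n (ltW h_gt0)); rewrite ltr_wpDl.
Qed.

Lemma exprn_gt c x : 1 < c -> exists n, x < c ^+ n.
Proof.
move=> c1; have c0 : 0 < c by apply: lt_trans c1.
have x1 : 0 < (`|x| + 1)^-1 by rewrite invr_gt0 ltr_wpDl.
have ci0 : 0 <= c^-1 by rewrite invr_ge0 ltW.
have ci1 : c^-1 < 1 by rewrite invf_lt1.
have [n] := exprn_lt ci0 ci1 x1.
rewrite exprVn ltf_pV2 ?posrE ?exprn_gt0 ?ltr_wpDl // => lt; exists n.
by apply: le_lt_trans lt; rewrite (le_trans (ler_norm x)) // lerDl.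
Qed.

Lemma ler_add_geom x y c q :
  0 <= q -> q < 1 -> (forall n, x <= y + c * q ^+ n) -> x <= y.
Proof.
move=> q0 q1 h; apply/ler_addgt0Pr => e e0.
have c1 : 0 < `|c| + 1 by rewrite ltr_wpDl.
have [n] := exprn_lt q0 q1 (divr_gt0 e0 c1).
rewrite ltr_pdivlMr // => qn.
apply: le_trans (h n) _; rewrite lerD2l.
have := exprn_ge0 n q0; have := ler_norm c; have := normr_ge0 c.
move: qn; set Q := q ^+ n; nra.
Qed.

Lemma ler_sqrtM_sqr a b k :
  0 <= a -> 0 <= b -> 0 <= k -> a ^+ 2 <= k * b ^+ 2 -> a <= Num.sqrt k * b.
Proof.
move=> a0 b0 k0 h.
rewrite -[a]ger0_norm // -[b]ger0_norm // -!sqrtr_sqr -sqrtrM //.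
by rewrite ler_sqrt // mulr_ge0 // sqr_ge0.
Qed.

Lemma ler_quad_eq0 a b : 0 <= b -> (forall t, 2 * t * a <= t ^+ 2 * b) -> a = 0.
Proof.
move=> b0 h; have b1 : 0 < b + 1 by lra.
have := h (a / (b + 1)); rewrite -(ler_pM2r (exprn_gt0 2 b1)).
have -> : 2 * (a / (b + 1)) * a * (b + 1) ^+ 2 = 2 * a ^+ 2 * (b + 1).
  by field; rewrite lt0r_neq0.
have -> : (a / (b + 1)) ^+ 2 * b * (b + 1) ^+ 2 = a ^+ 2 * b.
  by field; rewrite lt0r_neq0.
move=> le; apply/eqP; rewrite -sqrf_eq0 eq_le sqr_ge0 andbT.
by have := sqr_ge0 a; nra.
Qed.

Lemma ler_shift_div a b k w l : 0 <= a -> 0 <= b -> 0 <= k -> w + 1 < l ->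
  (l - w) * a <= k * b -> a <= (k + 1) / (l - (w + 1)) * b.
Proof.
move=> a0 b0 k0 wl le; have d_gt0 : 0 < l - (w + 1) by rewrite subr_gt0.
rewrite mulrAC ler_pdivlMr //; move: le d_gt0; set d := l - (w + 1).
have -> : l - w = d + 1 by rewrite /d; ring.
nra.
Qed.

End RealFacts.

Definition pos_herm_form (R : realType) (X : lmodType R[i]) (f : X -> X -> R[i]) :=
  [/\ forall (a : R[i]) (x y z : X), f (a *: x + y) z = a * f x z + f y z,
      forall x y : X, f x y = (f y x)^* &
      forall x : X, 0 <= f x x].

Lemma hilbert_pos_herm_form (R : realType) (X : lmodType R[i]) (ip : X -> X -> R[i]) :
  is_hilbert ip -> pos_herm_form ip.
Proof. by case. Qed.

Section PosHermForm.
Variables (R : realType) (X : lmodType R[i]) (f : X -> X -> R[i]).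
Hypothesis hf : pos_herm_form f.
Implicit Types (x y z : X) (t : R).

Let fZDl a x y z : f (a *: x + y) z = a * f x z + f y z. Proof. by case: hf. Qed.
Let f_herm x y : f x y = (f y x)^*. Proof. by case: hf. Qed.
Let f_ge0 x : 0 <= f x x. Proof. by case: hf. Qed.

Definition rform x y := complex.Re (f x y).
Local Notation nf := (hnorm f).

Lemma hermDl x y z : f (x + y) z = f x z + f y z.
Proof. by rewrite -{1}[x]scale1r fZDl mul1r. Qed.

Lemma herm0l z : f 0 z = 0.
Proof. by apply/(addrI (f 0 z)); rewrite -hermDl !addr0. Qed.

Lemma hermZl a x z : f (a *: x) z = a * f x z.
Proof. by rewrite -[a *: x]addr0 fZDl herm0l addr0. Qed.

Lemma hermNl x z : f (- x) z = - f x z.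
Proof. by rewrite -scaleN1r hermZl mulN1r. Qed.

Lemma rformC x y : rform x y = rform y x.
Proof. by rewrite /rform f_herm ReJ. Qed.

Lemma rformDl x y z : rform (x + y) z = rform x z + rform y z.
Proof. by rewrite /rform hermDl ReD. Qed.

Lemma rformZl t x z : rform (t%:C *: x) z = t * rform x z.
Proof. by rewrite /rform hermZl ReM_real. Qed.

Lemma rformNl x z : rform (- x) z = - rform x z.
Proof. by rewrite /rform hermNl ReN. Qed.

Lemma rformBl x y z : rform (x - y) z = rform x z - rform y z.
Proof. by rewrite rformDl rformNl. Qed.

Lemma rformDr x y z : rform z (x + y) = rform z x + rform z y.
Proof. by rewrite rformC rformDl !(rformC _ z). Qed.

Lemma rformZr t x z : rform z (t%:C *: x) = t * rform z x.
Proof. by rewrite rformC rformZl rformC. Qed.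

Lemma rformNr x z : rform z (- x) = - rform z x.
Proof. by rewrite rformC rformNl rformC. Qed.

Lemma rform0l z : rform 0 z = 0.
Proof. by rewrite /rform herm0l. Qed.

Lemma rform_ge0 x : 0 <= rform x x.
Proof. by have := f_ge0 x; rewrite lecE => /andP[]. Qed.

Lemma herm_diagE x : f x x = (rform x x)%:C.
Proof. by have := f_ge0 x; rewrite lecE /rform; case: (f x x) => a b /= /andP[/eqP ->]. Qed.

Lemma rform_diagD x y :
  rform (x + y) (x + y) = rform x x + 2 * rform x y + rform y y.
Proof. by rewrite rformDl !rformDr (rformC y x); ring. Qed.

Lemma rform_diagZ t x : rform (t%:C *: x) (t%:C *: x) = t ^+ 2 * rform x x.
Proof. by rewrite rformZl rformZr mulrA expr2. Qed.

Lemma rform_diagN x : rform (- x) (- x) = rform x x.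
Proof. by rewrite rformNl rformNr opprK. Qed.

Lemma hnorm_ge0 x : 0 <= nf x.
Proof. exact: sqrtr_ge0. Qed.

Lemma hnorm_sqr x : nf x ^+ 2 = rform x x.
Proof. by rewrite sqr_sqrtr // rform_ge0. Qed.

Lemma rform_sqr_le x y : rform x y ^+ 2 <= rform x x * rform y y.
Proof.
have quad t : 0 <= rform x x + 2 * t * rform x y + t ^+ 2 * rform y y.
  by have := rform_ge0 (x + t%:C *: y); rewrite rform_diagD rform_diagZ rformZr mulrA.
have [yy0|yy_neq0] := eqVneq (rform y y) 0.
  suff -> : rform x y = 0 by rewrite expr0n /= yy0 mulr0.
  apply/eqP; apply: contraT => xy_neq0.
  have := quad (- (rform x x + 1) / (2 * rform x y)).
  have -> : 2 * (- (rform x x + 1) / (2 * rform x y)) * rform x y = - (rform x x + 1).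
    by field; rewrite xy_neq0 /= ?pnatr_eq0.
  by rewrite yy0 mulr0 addr0; lra.
have yy_gt0 : 0 < rform y y by rewrite lt_def yy_neq0 rform_ge0.
have := quad (- rform x y / rform y y).
have -> : rform x x + 2 * (- rform x y / rform y y) * rform x y
           + (- rform x y / rform y y) ^+ 2 * rform y y
          = rform x x - rform x y ^+ 2 / rform y y by field.
by rewrite subr_ge0 ler_pdivrMr.
Qed.

Lemma normr_rform_le x y : `|rform x y| <= nf x * nf y.
Proof.
rewrite -(ler_pXn2r (_ : 0 < 2)%N) ?nnegrE ?mulr_ge0 ?hnorm_ge0 //.
by rewrite real_normK ?num_real // exprMn !hnorm_sqr rform_sqr_le.
Qed.

Lemma rform_le x y : rform x y <= nf x * nf y.
Proof. exact: le_trans (ler_norm _) (normr_rform_le x y). Qed.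

Lemma ler_hnormD x y : nf (x + y) <= nf x + nf y.
Proof.
rewrite -(ler_pXn2r (_ : 0 < 2)%N) ?nnegrE ?addr_ge0 ?hnorm_ge0 //.
rewrite hnorm_sqr rform_diagD sqrrD !hnorm_sqr -mulr_natl.
by have := rform_le x y; lra.
Qed.

Lemma hnormZ t x : nf (t%:C *: x) = `|t| * nf x.
Proof. by rewrite /hnorm -/(rform _ _) rform_diagZ sqrtrM ?sqr_ge0 // sqrtr_sqr. Qed.

Lemma hnorm0 : nf 0 = 0.
Proof. by rewrite /hnorm -/(rform _ _) rform0l sqrtr0. Qed.

Lemma hdistC x y : nf (x - y) = nf (y - x).
Proof. by rewrite -opprB /hnorm -/(rform _ _) rform_diagN. Qed.

Lemma ler_hdistD x y z : nf (x - z) <= nf (x - y) + nf (y - z).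
Proof. by apply: le_trans (ler_hnormD _ _); rewrite addrA subrK. Qed.

Lemma hnorm_eq0 x : nf x = 0 -> rform x x = 0.
Proof. by rewrite -hnorm_sqr => ->; rewrite expr0n. Qed.

Lemma rform_parallelogram x y :
  rform (x - y) (x - y) + rform (x + y) (x + y) = 2 * rform x x + 2 * rform y y.
Proof. by rewrite !rform_diagD rform_diagN rformNr; ring. Qed.

Lemma hnorm_parallelogram y a b :
  nf (a - b) ^+ 2 = 2 * nf (y - a) ^+ 2 + 2 * nf (y - b) ^+ 2
                    - 4 * nf (y - ((2^-1 : R)%:C *: a + (2^-1 : R)%:C *: b)) ^+ 2.
Proof.
have mid : (y - a) + (y - b) = (2 : R)%:C *: (y - ((2^-1 : R)%:C *: a + (2^-1 : R)%:C *: b)).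
  rewrite scalerBr scalerDr !scalerA -!rmorphM mulfV ?pnatr_eq0 // !scale1r.
  rewrite (_ : (2 : R)%:C = 2%:R) ?rmorph_nat // scaler_nat mulr2n.
  by rewrite opprD !addrA (addrAC y (- a)).
have := rform_parallelogram (y - a) (y - b).
rewrite mid rform_diagZ -!hnorm_sqr [y - a - _]addrC opprB addrA subrK (hdistC b a).
by rewrite (_ : 2 ^+ 2 = 4); [lra | rewrite expr2 -natrM].
Qed.

Lemma rform_eq0_of_min x y : (forall t, nf x <= nf (x - t%:C *: y)) -> rform x y = 0.
Proof.
move=> hmin; apply: (ler_quad_eq0 (rform_ge0 y)) => t.
have := hmin t; rewrite -(ler_pXn2r (_ : 0 < 2)%N) ?nnegrE ?hnorm_ge0 //.
rewrite !hnorm_sqr rform_diagD rform_diagN rform_diagZ rformNr rformZr; lra.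
Qed.

End PosHermForm.

Definition hcvg (R : realType) (X : lmodType R[i]) (ip : X -> X -> R[i])
    (u : nat -> X) (l : X) :=
  forall e : R, 0 < e -> exists N, forall n, (N <= n)%N -> hnorm ip (u n - l) < e.

Section HilbertSpace.
Variables (R : realType) (X : lmodType R[i]) (ip : X -> X -> R[i]).
Hypothesis hX : is_hilbert ip.
Local Notation nX := (hnorm ip).
Let hf := hilbert_pos_herm_form hX.

Lemma hnorm0_eq0 x : nX x = 0 -> x = 0.
Proof.
move=> /(hnorm_eq0 hf) x0; case: hX => _ _ _ ip_def _.
by apply: ip_def; rewrite (herm_diagE hf) x0.
Qed.

Lemma hilbert_geom_cvg (u : nat -> X) (a q : R) :
  0 <= a -> 0 <= q -> q < 1 -> (forall n, nX (u n.+1 - u n) <= a * q ^+ n) ->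
  exists l, hcvg ip u l /\ forall n, nX (u n - l) <= a / (1 - q) * q ^+ n.
Proof.
move=> a0 q0 q1 hu; have q1' : 0 < 1 - q by rewrite subr_gt0.
have tail n m : (n <= m)%N -> nX (u m - u n) <= a / (1 - q) * q ^+ n.
  move=> /subnKC <-; set b := a / (1 - q).
  have b0 : 0 <= b by rewrite divr_ge0 // ltW.
  suff : nX (u (n + (m - n))%N - u n) <= b * q ^+ n * (1 - q ^+ (m - n)).
    move/le_trans; apply; rewrite ler_piMr ?(mulr_ge0 b0 (exprn_ge0 _ q0)) //.
    by rewrite gerBl exprn_ge0.
  elim: (m - n)%N => [|k IH]; first by rewrite addn0 subrr (hnorm0 hf) subrr mulr0.
  apply: le_trans (ler_hdistD hf _ (u (n + k)%N) _) _.
  rewrite addnS; apply: le_trans (lerD (hu _) IH) _.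
  by rewrite exprD exprS /b le_eqVlt; apply/orP; left; apply/eqP; field; rewrite lt0r_neq0.
have [l ul] : exists l, hcvg ip u l.
  case: hX => _ _ _ _; apply => e e0.
  have eps_gt0 : 0 < e / 2 * (1 - q) / (a + 1) by rewrite !divr_gt0 ?mulr_gt0 //; lra.
  have [N] := exprn_lt q0 q1 eps_gt0; rewrite ltr_pdivlMr; last by lra.
  move=> qN; exists N => m n Nm Nn.
  apply: le_lt_trans (ler_hdistD hf _ (u N) _) _; rewrite (hdistC hf (u N)).
  have bN : a / (1 - q) * q ^+ N < e / 2.
    rewrite mulrAC ltr_pdivrMr //.
    by have := exprn_ge0 N q0; move: qN; set Q := q ^+ N; nra.
  by have := tail _ _ Nm; have := tail _ _ Nn; lra.
exists l; split => // n; apply/ler_addgt0Pr => e e0.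
have [N HN] := ul e e0.
apply: le_trans (ler_hdistD hf _ (u (maxn n N)) _) _.
rewrite (hdistC hf); apply: lerD; first by apply: tail; rewrite leq_maxl.
by apply/ltW/HN; rewrite leq_maxr.
Qed.

Section NearestPoint.
Variable P : X -> Prop.
Hypotheses (P_closed : hclosed ip P) (P0 : P 0)
  (P_DZ : forall x y (t : R), P x -> P y -> P (x + t%:C *: y)).

Lemma nearest_point y : exists2 p, P p & forall q, P q -> nX (y - p) <= nX (y - q).
Proof.
pose S := fun r : R => exists2 q, P q & r = nX (y - q).
have S_inf : has_inf S.
  by split; [exists (nX (y - 0)); exists 0 | exists 0 => _ [q _ ->]; apply: hnorm_ge0].
pose d := inf S.
have d_le q : P q -> d <= nX (y - q) by move=> Pq; apply: (ge_inf S_inf.2); exists q.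
have d0 : 0 <= d by apply: lb_le_inf S_inf.1 _ => _ [q _ ->]; apply: hnorm_ge0.
pose r : R := 2^-1.
have r0 : 0 < r by rewrite invr_gt0.
have r1 : r < 1 by rewrite invf_lt1 ?ltr1n.
have near n : exists q, P q /\ nX (y - q) < d + (r ^+ n) ^+ 2.
  have [_ [q Pq ->] lt] := inf_adherent (exprn_gt0 2 (exprn_gt0 n r0)) S_inf.
  by exists q.
have [qs /all_and2[Pqs qs_lt]] := choice near.
have sq_le n : nX (y - qs n) ^+ 2 <= (d + (r ^+ n) ^+ 2) ^+ 2.
  by rewrite lerXn2r ?nnegrE ?hnorm_ge0 ?addr_ge0 ?sqr_ge0 // ltW.
have mid a b : P a -> P b ->
    nX (a - b) ^+ 2 <= 2 * nX (y - a) ^+ 2 + 2 * nX (y - b) ^+ 2 - 4 * d ^+ 2.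
  move=> Pa Pb; rewrite (hnorm_parallelogram hf y a b); set m := (_ *: a + _ *: b).
  have Pm : P m by apply: P_DZ => //; rewrite -[_ *: a]add0r; apply: P_DZ.
  have : d ^+ 2 <= nX (y - m) ^+ 2 by rewrite lerXn2r ?nnegrE ?hnorm_ge0 ?d_le.
  lra.
have step n : nX (qs n.+1 - qs n) <= Num.sqrt (8 * d + 4) * r ^+ n.
  apply: ler_sqrtM_sqr; rewrite ?hnorm_ge0 ?exprn_ge0 ?(ltW r0) //; first lra.
  apply: le_trans (mid _ _ (Pqs _) (Pqs _)) _.
  have := sq_le n; have := sq_le n.+1.
  have En1 : (r ^+ n.+1) ^+ 2 <= (r ^+ n) ^+ 2.
    rewrite lerXn2r ?nnegrE ?exprn_ge0 ?(ltW r0) // exprS.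
    by rewrite ler_piMl ?exprn_ge0 ?(ltW r0) ?(ltW r1).
  have E1 : (r ^+ n) ^+ 2 <= 1 by rewrite exprn_ile1 ?exprn_ge0 ?exprn_ile1 ?(ltW r0) ?(ltW r1).
  move: En1 E1; set E := (r ^+ n) ^+ 2; set E' := (r ^+ n.+1) ^+ 2.
  by have := sqr_ge0 (r ^+ n.+1); rewrite -/E'; nra.
have [p [qs_cvg qs_p]] := hilbert_geom_cvg (sqrtr_ge0 _) (ltW r0) r1 step.
exists p; first exact: P_closed qs_cvg.
move=> q Pq; apply: le_trans (d_le _ Pq).
apply: (ler_add_geom (c := 1 + Num.sqrt (8 * d + 4) / (1 - r)) (ltW r0) r1) => n.
apply: le_trans (ler_hdistD hf _ (qs n) _) _.
rewrite mulrDl mul1r addrA lerD ?qs_p // ltW // (lt_le_trans (qs_lt n)) // lerD2l.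
by rewrite expr2 ler_piMl ?exprn_ge0 ?exprn_ile1 ?(ltW r0) ?(ltW r1).
Qed.
End NearestPoint.

Section UniformBoundedness.
Variables (P : X -> Prop) (I : Type) (Q : I -> Prop) (phi : I -> X -> R).
Hypotheses (P_closed : hclosed ip P) (P0 : P 0)
  (P_DZ : forall x y (t : R), P x -> P y -> P (x + t%:C *: y)).
Hypothesis phiDZ : forall i x y (t : R), phi i (x + t%:C *: y) = phi i x + t * phi i y.
Hypothesis phi_bounded : forall i, Q i -> exists c, forall x, P x -> `|phi i x| <= c * nX x.
Hypothesis phi_ptwise_bounded : forall x, P x -> exists B, forall i, Q i -> `|phi i x| <= B.

Let phi0 i : phi i 0 = 0.
Proof.
have := phiDZ i 0 0 1; rewrite scale1r addr0 mul1r => /eqP.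
by rewrite -subr_eq subrr eq_sym => /eqP.
Qed.

Let phiZ i x (t : R) : phi i (t%:C *: x) = t * phi i x.
Proof. by rewrite -[_ *: x]add0r phiDZ phi0 add0r. Qed.

Let PZ x (t : R) : P x -> P (t%:C *: x).
Proof. by move=> Px; rewrite -[_ *: x]add0r; apply: P_DZ. Qed.

Let unit_vals i := fun r : R => exists x, [/\ P x, nX x <= 1 & r = `|phi i x|].
Let opnorm i := sup (unit_vals i).

Let unit_vals_sup i : Q i -> has_sup (unit_vals i).
Proof.
move=> Qi; have [c Hc] := phi_bounded Qi; split.
  by exists 0, 0; rewrite (hnorm0 hf) phi0 normr0.
exists `|c| => _ [x [Px x1 ->]]; apply: le_trans (Hc _ Px) _.
apply: le_trans (ler_norm _) _; rewrite normrM.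
by rewrite ler_piMr // ger0_norm // hnorm_ge0.
Qed.

Let opnorm_ge0 i : Q i -> 0 <= opnorm i.
Proof.
move=> Qi; apply: (sup_upper_bound (unit_vals_sup Qi)).
by exists 0; rewrite (hnorm0 hf) phi0 normr0.
Qed.

Let ler_opnorm i x : Q i -> P x -> `|phi i x| <= opnorm i * nX x.
Proof.
move=> Qi Px; have [c Hc] := phi_bounded Qi.
have [x0|x_neq0] := eqVneq (nX x) 0; first by have := Hc _ Px; rewrite x0 !mulr0.
have x_gt0 : 0 < nX x by rewrite lt_def x_neq0 hnorm_ge0.
have : unit_vals i `|phi i ((nX x)^-1%:C *: x)|.
  exists ((nX x)^-1%:C *: x); split => //; first exact: PZ.
  by rewrite (hnormZ hf) ger0_norm ?invr_ge0 ?hnorm_ge0 // mulVf.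
move/(sup_upper_bound (unit_vals_sup Qi)).
by rewrite phiZ normrM ger0_norm ?invr_ge0 ?hnorm_ge0 // mulrC ler_pdivrMr.
Qed.

(* Sokal's lemma: one of x +- t xi does the job, xi almost norming phi i. *)
Let sokal_step i x (t : R) : Q i -> P x -> 0 < t ->
  exists x', [/\ P x', nX (x' - x) <= t & 2 / 3 * t * opnorm i <= `|phi i x'|].
Proof.
move=> Qi Px t0.
have [N0|N_neq0] := eqVneq (opnorm i) 0.
  by exists x; rewrite subrr (hnorm0 hf) N0 mulr0 ltW.
have N3 : 0 < opnorm i / 3 by rewrite divr_gt0 // lt_def N_neq0 opnorm_ge0.
have [_ [xi [Pxi xi1 ->]] xi_big] := sup_adherent N3 (unit_vals_sup Qi).
have {xi_big} xi_big : 2 / 3 * t * opnorm i <= t * `|phi i xi|.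
  by rewrite -mulrA mulrCA ler_wpM2l ?(ltW t0) //; move: xi_big; rewrite -/(opnorm i); lra.
have near (s : R) : `|s| = 1 -> nX (x + (s * t)%:C *: xi - x) <= t.
  move=> s1; rewrite addrC addKr (hnormZ hf) normrM s1 mul1r ger0_norm ?(ltW t0) //.
  by rewrite ler_piMr ?(ltW t0).
have [big|small] := lerP (t * `|phi i xi|) `|phi i (x + (1 * t)%:C *: xi)|.
  exists (x + (1 * t)%:C *: xi).
  by split; [exact: P_DZ | exact/near/normr1 | exact: le_trans big].
exists (x + (-1 * t)%:C *: xi); split; [exact: P_DZ | by apply/near; rewrite normrN normr1 |].
move: small; rewrite !phiDZ => small.
have : `|2 * (t * phi i xi)| <= `|phi i x + 1 * t * phi i xi| + `|phi i x + -1 * t * phi i xi|.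
  rewrite (_ : 2 * _ = (phi i x + 1 * t * phi i xi) - (phi i x + -1 * t * phi i xi)).
    exact: ler_normB.
  ring.
rewrite normrM (normrM t) (ger0_norm (ltW t0)) normr_nat.
by move: xi_big small; lra.
Qed.

Let hump_sequence (sel : nat -> I) : (forall n, Q (sel n)) ->
  exists xs : nat -> X, forall n, [/\ P (xs n), nX (xs n.+1 - xs n) <= 3^-1 ^+ n.+1
    & 2 / 3 * 3^-1 ^+ n.+1 * opnorm (sel n) <= `|phi (sel n) (xs n.+1)|].
Proof.
move=> Qsel; have r_gt0 : (0 : R) < 3^-1 by rewrite invr_gt0.
have next (nx : nat * X) : exists x', P nx.2 -> [/\ P x', nX (x' - nx.2) <= 3^-1 ^+ nx.1.+1
    & 2 / 3 * 3^-1 ^+ nx.1.+1 * opnorm (sel nx.1) <= `|phi (sel nx.1) x'|].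
  case: nx => n x /=; have [Px|] := pselect (P x); last by exists x.
  have [x' Hx'] := sokal_step (Qsel n) Px (exprn_gt0 n.+1 r_gt0).
  by exists x'.
have [f Hf] := choice next.
pose xs := fix xs n := if n is n'.+1 then f (n', xs n') else 0.
have Pxs n : P (xs n) by elim: n => [|n IH] //=; case: (Hf (n, xs n) IH).
by exists xs => n; have [] := Hf (n, xs n) (Pxs n).
Qed.

Lemma uniform_boundedness : exists K, forall i x, Q i -> P x -> `|phi i x| <= K * nX x.
Proof.
apply/not_existsP => unbounded.
have big n : exists i, Q i /\ 18 * 6 ^+ n < opnorm i.
  apply/not_existsP => small; apply: (unbounded (18 * 6 ^+ n)) => i x Qi Px.
  apply: le_trans (ler_opnorm Qi Px) _; rewrite ler_wpM2r ?hnorm_ge0 // leNgt.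
  by apply/negP => lt; apply: (small i).
have [sel /all_and2[Qsel sel_big]] := choice big.
have [xs /all_and3[Pxs xs_step xs_big]] := hump_sequence Qsel.
have r0 : (0 : R) <= 3^-1 by rewrite invr_ge0.
have r1 : (3^-1 : R) < 1 by rewrite invf_lt1 ?ltr1n.
have xs_geom n : nX (xs n.+1 - xs n) <= 3^-1 * 3^-1 ^+ n by rewrite -exprS.
have [l [xs_cvg xs_l]] := hilbert_geom_cvg r0 r0 r1 xs_geom.
have [B HB] := phi_ptwise_bounded (P_closed (Pxs) xs_cvg).
pose n := Num.Def.archi_bound B; pose i := sel n.
have B_lt : B < 2 ^+ n by apply: upper_nthrootP.
have Pd : P (xs n.+1 - l).
  by have := P_DZ (-1) (Pxs n.+1) (P_closed Pxs xs_cvg); rewrite rmorphN1 scaleN1r.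
have far : `|phi i (xs n.+1 - l)| <= opnorm i * (2^-1 * 3^-1 ^+ n.+1).
  apply: le_trans (ler_opnorm (Qsel n) Pd) _; rewrite ler_wpM2l ?opnorm_ge0 //.
  have -> : (2^-1 : R) = 3^-1 / (1 - 3^-1) by field.
  exact: xs_l.
have split_l : phi i (xs n.+1) = phi i (xs n.+1 - l) + phi i l.
  by have := phiDZ i (xs n.+1) l (-1); rewrite rmorphN1 scaleN1r => ->; ring.
have := xs_big n; rewrite -/i split_l => near_big.
have := ler_normD (phi i (xs n.+1 - l)) (phi i l).
have := HB i (Qsel n); have := sel_big n; rewrite -/i.
have e6 : 3^-1 ^+ n * 6 ^+ n = 2 ^+ n :> R by rewrite -exprMn; congr (_ ^+ _); field.
(* |phi i l| >= (2/3 - 1/2) 3^-(n+1) opnorm i > 2 ^+ n > B *)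
have := exprn_ge0 n r0; move: near_big far e6 B_lt; rewrite exprS.
set T := 3^-1 ^+ n; set S := 6 ^+ n; set N := opnorm i; nra.
Qed.
End UniformBoundedness.

End HilbertSpace.

Section SeminormContraction.
Variables (R : realType) (V : zmodType) (p : V -> R).
Hypotheses (p_ge0 : forall x, 0 <= p x) (p_distC : forall x y, p (x - y) = p (y - x))
  (p_distD : forall x y z, p (x - z) <= p (x - y) + p (y - z)).
Hypothesis p_geom_complete : forall (u : nat -> V) (a q : R),
  0 <= a -> 0 <= q -> q < 1 -> (forall n, p (u n.+1 - u n) <= a * q ^+ n) ->
  exists y b, forall n, p (u n - y) <= b * q ^+ n.

Lemma contraction_fixpoint (g : V -> V) (q : R) : 0 <= q -> q < 1 ->
  (forall x y, p (g x - g y) <= q * p (x - y)) -> exists y, p (g y - y) = 0.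
Proof.
move=> q0 q1 g_contr; pose u n := iter n g 0.
have u_step n : p (u n.+1 - u n) <= p (u 1%N - u 0%N) * q ^+ n.
  elim: n => [|n IH]; first by rewrite expr0 mulr1.
  by apply: le_trans (g_contr _ _) _; rewrite exprS mulrCA ler_wpM2l.
have [y [b u_y]] := p_geom_complete (p_ge0 _) q0 q1 u_step.
have b0 : 0 <= b by have := u_y 0%N; rewrite expr0 mulr1; apply: le_trans.
exists y; apply/eqP; rewrite eq_le p_ge0 andbT.
apply: (ler_add_geom (c := 2 * b) q0 q1) => n; rewrite add0r.
apply: le_trans (p_distD _ (u n.+1) _) _.
have := g_contr y (u n); rewrite [p (y - _)]p_distC -/(u n.+1) => g_near.
have := u_y n.+1; rewrite exprS mulrCA => u_y1.
have : q * p (u n - y) <= q * (b * q ^+ n) by rewrite ler_wpM2l ?u_y.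
have : q * (b * q ^+ n) <= b * q ^+ n.
  by rewrite ler_piMl ?(mulr_ge0 b0 (exprn_ge0 _ q0)) ?(ltW q1).
move: g_near u_y1; set P1 := p _; set P2 := p _; set P3 := p _; lra.
Qed.
End SeminormContraction.

Section LinearOn.
Variables (R : realType) (X : lmodType R[i]) (D : X -> Prop).
Hypothesis hD : subspace D.

Lemma subspace0 : D 0. Proof. by case: hD. Qed.

Lemma subspaceDZ a x y : D x -> D y -> D (a *: x + y).
Proof. by case: hD => _; apply. Qed.

Lemma subspaceD x y : D x -> D y -> D (x + y).
Proof. by move=> Dx Dy; rewrite -[x]scale1r; apply: subspaceDZ. Qed.

Lemma subspaceB x y : D x -> D y -> D (x - y).
Proof. by move=> Dx Dy; rewrite -scaleN1r addrC; apply: subspaceDZ. Qed.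

Variables (Z : lmodType R[i]) (F : X -> Z).
Hypothesis hF : linear_on D F.

Lemma linear_onD x y : D x -> D y -> F (x + y) = F x + F y.
Proof. by move=> Dx Dy; rewrite -{1}[x]scale1r hF // scale1r. Qed.

Lemma linear_on0 : F 0 = 0.
Proof.
have := linear_onD subspace0 subspace0; rewrite addr0 => /eqP.
by rewrite -subr_eq subrr eq_sym => /eqP.
Qed.

Lemma linear_onZ a x : D x -> F (a *: x) = a *: F x.
Proof. by move=> Dx; rewrite -[a *: x]addr0 hF ?linear_on0 ?addr0 //; apply: subspace0. Qed.

Lemma linear_onB x y : D x -> D y -> F (x - y) = F x - F y.
Proof.
by move=> Dx Dy; rewrite -scaleN1r addrC hF // scaleN1r addrC.
Qed.
End LinearOn.

Lemma subspaceT (R : realType) (X : lmodType R[i]) : subspace (fun _ : X => True).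
Proof. by []. Qed.

Lemma subrACA (V : zmodType) (a b c d : V) : (a - b) - (c - d) = (a - c) - (b - d).
Proof. by rewrite !opprD !opprK addrACA. Qed.

Section ClosedRangeNonneg.
Variables (R : realType) (X : lmodType R[i]) (ip : X -> X -> R[i]) (E0 : X -> X).
Hypotheses (hX : is_hilbert ip) (E0_lin : linear_on (fun _ => True) E0)
  (E0_bounded : exists c : R, forall x, hnorm ip (E0 x) <= c * hnorm ip x)
  (E0_sym : forall x y, ip (E0 x) y = ip x (E0 y)) (E0_ge0 : forall x, 0 <= ip (E0 x) x)
  (E0_closed_range : hclosed ip (fun y => exists x, E0 x = y)).
Local Notation nX := (hnorm ip).
Let hf := hilbert_pos_herm_form hX.

Let E0D x y : E0 (x + y) = E0 x + E0 y. Proof. exact (linear_onD E0_lin I I). Qed.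
Let E00 : E0 0 = 0. Proof. exact (linear_on0 (subspaceT X) E0_lin). Qed.
Let E0Z a x : E0 (a *: x) = a *: E0 x. Proof. exact (linear_onZ (subspaceT X) E0_lin a I). Qed.
Let E0B x y : E0 (x - y) = E0 x - E0 y. Proof. exact (linear_onB E0_lin I I). Qed.

Definition Eform x y := ip (E0 x) y.
Local Notation pE := (hnorm Eform).

Lemma Eform_pos_herm : pos_herm_form Eform.
Proof.
split=> [a x y z|x y|x]; rewrite /Eform.
- by case: hf => + _ _; rewrite E0_lin.
- by case: hf => _ + _; rewrite E0_sym => ->.
- exact: E0_ge0.
Qed.
Let hE := Eform_pos_herm.

Lemma Eform_sqr x : pE x ^+ 2 = rform ip (E0 x) x.
Proof. exact: hnorm_sqr hE x. Qed.

Lemma Eform_le_hnorm : exists k : R, 0 <= k /\ forall x, pE x <= k * nX x.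
Proof.
have [c Hc] := E0_bounded; exists (Num.sqrt `|c|); split=> [|x]; first exact: sqrtr_ge0.
apply: ler_sqrtM_sqr; rewrite ?hnorm_ge0 //.
rewrite Eform_sqr; apply: le_trans (rform_le hf _ _) _.
rewrite expr2 mulrA ler_wpM2r ?hnorm_ge0 //.
by apply: le_trans (Hc x) _; rewrite ler_wpM2r ?hnorm_ge0 ?ler_norm.
Qed.

Lemma hnormE0_le_Eform : exists k : R, 0 <= k /\ forall x, nX (E0 x) <= k * pE x.
Proof.
have [k [k0 Hk]] := Eform_le_hnorm; exists k; split=> // x.
have : nX (E0 x) ^+ 2 <= k * pE x * nX (E0 x).
  rewrite (hnorm_sqr hf) -[rform _ _ _]/(rform Eform x (E0 x)).
  apply: le_trans (rform_le hE _ _) _.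
  by rewrite mulrAC (mulrC (k * _)) ler_wpM2l ?hnorm_ge0.
have := hnorm_ge0 ip (E0 x); have := mulr_ge0 k0 (hnorm_ge0 Eform x); nra.
Qed.

Lemma Eform_eq0 x : pE x = 0 -> E0 x = 0.
Proof.
have [k [_ Hk]] := hnormE0_le_Eform => x0; apply: (hnorm0_eq0 hX).
by apply/eqP; rewrite eq_le hnorm_ge0 andbT; have := Hk x; rewrite x0 mulr0.
Qed.

Lemma ranE0_DZ x y (t : R) : (exists a, E0 a = x) -> (exists b, E0 b = y) ->
  exists c, E0 c = x + t%:C *: y.
Proof. by move=> [a <-] [b <-]; exists (a + t%:C *: b); rewrite E0D E0Z. Qed.

(* The closed-range estimate: uniform boundedness of r |-> Re (r, y) / |E0 y| on ran E0,
   pointwise bounded since Re (E0 z, y) = Re (z, E0 y). *)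
Lemma Eform_le_hnormE0 : exists k : R, 0 <= k /\ forall y, pE y <= k * nX (E0 y).
Proof.
pose phi y r := rform ip r y / nX (E0 y).
have [K HK] : exists K, forall y r, 0 < nX (E0 y) -> (exists x, E0 x = r) ->
    `|phi y r| <= K * nX r.
  apply: (uniform_boundedness hX E0_closed_range (ex_intro _ 0 E00) ranE0_DZ).
  - by move=> y a b t; rewrite /phi (rformDl hf) (rformZl hf) mulrDl mulrA.
  - move=> y y_gt0; exists (nX y / nX (E0 y)) => r _.
    rewrite /phi normrM normfV (ger0_norm (hnorm_ge0 _ _)) mulrAC ler_pM2r ?invr_gt0 //.
    by rewrite mulrC normr_rform_le.
  - move=> _ [z <-]; exists (nX z) => y y_gt0.
    rewrite /phi normrM normfV (ger0_norm (hnorm_ge0 _ _)) ler_pdivrMr //.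
    by rewrite /rform E0_sym -/(rform _ _ _) normr_rform_le.
exists (Num.sqrt `|K|); split=> [|y]; first exact: sqrtr_ge0.
apply: ler_sqrtM_sqr; rewrite ?hnorm_ge0 //.
have [y0|y_neq0] := eqVneq (nX (E0 y)) 0.
  by rewrite Eform_sqr (hnorm0_eq0 hX y0) (rform0l hf) (hnorm0 hf) expr0n mulr0.
have y_gt0 : 0 < nX (E0 y) by rewrite lt_def y_neq0 hnorm_ge0.
have := HK y (E0 y) y_gt0 (ex_intro _ y erefl).
rewrite /phi -Eform_sqr ger0_norm ?divr_ge0 ?sqr_ge0 ?hnorm_ge0 // ler_pdivrMr //.
by move/le_trans; apply; rewrite -mulrA -expr2 ler_wpM2r ?sqr_ge0 ?ler_norm.
Qed.

Lemma Eform_geom_complete (u : nat -> X) (a q : R) :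
  0 <= a -> 0 <= q -> q < 1 -> (forall n, pE (u n.+1 - u n) <= a * q ^+ n) ->
  exists y b, forall n, pE (u n - y) <= b * q ^+ n.
Proof.
move=> a0 q0 q1 u_step.
have [k1 [k10 Hk1]] := hnormE0_le_Eform; have [k2 [k20 Hk2]] := Eform_le_hnormE0.
have Eu_step n : nX (E0 (u n.+1) - E0 (u n)) <= k1 * a * q ^+ n.
  by rewrite -E0B -mulrA; apply: le_trans (Hk1 _) _; rewrite ler_wpM2l.
have [l [Eu_cvg Eu_l]] := hilbert_geom_cvg hX (mulr_ge0 k10 a0) q0 q1 Eu_step.
have [y Ey] := E0_closed_range (fun n => ex_intro _ (u n) erefl) Eu_cvg.
exists y, (k2 * (k1 * a / (1 - q))) => n.
by rewrite -mulrA; apply: le_trans (Hk2 _) _; rewrite E0B Ey ler_wpM2l.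
Qed.

(* The defect y - E0 z of a best approximation of y from ran E0 is orthogonal to
   ran E0, hence lies in ker E0. *)
Lemma E0_surj : (forall x, E0 x = 0 -> x = 0) -> forall y, exists x, E0 x = y.
Proof.
move=> E0_inj y.
have [_ [z <-] z_near] := nearest_point hX E0_closed_range (ex_intro _ 0 E00) ranE0_DZ y.
set u := y - E0 z.
have orth : rform ip u (E0 u) = 0.
  apply: (rform_eq0_of_min hf) => t.
  have -> : u - t%:C *: E0 u = y - E0 (z + t%:C *: u) by rewrite E0D E0Z opprD addrA.
  by apply: z_near; exists (z + t%:C *: u).
have : pE u = 0.
  by rewrite /hnorm -/(rform _ _ _) /rform /Eform E0_sym -/(rform _ _ _) orth sqrtr0.
by move/Eform_eq0/E0_inj/eqP; rewrite subr_eq0 => /eqP ->; exists z.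
Qed.

Lemma hnorm_le_Eform : (forall x, E0 x = 0 -> x = 0) ->
  exists k : R, 0 <= k /\ forall y, nX y <= k * pE y.
Proof.
move=> E0_inj; have [k [k0 Hk]] := Eform_le_hnormE0; exists k; split=> // y.
have [z Ez] := E0_surj E0_inj y.
have : nX y ^+ 2 <= k * pE y * nX y.
  rewrite (hnorm_sqr hf) -{1}Ez /rform E0_sym -/(rform ip _ _) (rformC hf).
  rewrite -[rform ip (E0 y) z]/(rform Eform y z).
  apply: le_trans (rform_le hE _ _) _.
  by rewrite mulrAC (mulrC (k * _)) ler_wpM2l ?hnorm_ge0 // -Ez Hk.
have := hnorm_ge0 ip y; have := mulr_ge0 k0 (hnorm_ge0 Eform y); nra.
Qed.

Section DissipativePencil.
Variables (Y : lmodType R[i]) (D : X -> Prop) (A0 : X -> X) (G : X -> Y) (w : R).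
Hypotheses (hD : subspace D) (A0_lin : linear_on D A0) (G_lin : linear_on D G).
Hypothesis A0_dissipative : forall x, D x -> G x = 0 ->
  complex.Re (ip (A0 x - w%:C *: E0 x) x) <= 0.
Hypothesis kernels_trivial : forall x, D x -> E0 x = 0 -> A0 x = 0 -> G x = 0 -> x = 0.

Definition kerG x := D x /\ G x = 0.
Definition pencil (l : R) x := l%:C *: E0 x - A0 x.
Definition pencil_surj l := forall z, exists x, kerG x /\ pencil l x = z.

Lemma kerGB x y : kerG x -> kerG y -> kerG (x - y).
Proof.
by move=> [Dx Gx] [Dy Gy]; split; [exact: subspaceB | rewrite (linear_onB G_lin) // Gx Gy subrr].
Qed.

Lemma pencilB l x y : D x -> D y -> pencil l (x - y) = pencil l x - pencil l y.
Proof.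
by move=> Dx Dy; rewrite /pencil (linear_onB A0_lin) // E0B scalerBr subrACA.
Qed.

Lemma pencilD l x y : D x -> D y -> pencil l (x + y) = pencil l x + pencil l y.
Proof.
by move=> Dx Dy; rewrite /pencil (linear_onD A0_lin) // E0D scalerDr opprD addrACA.
Qed.

Lemma pencil_shift l l1 x : pencil l x = pencil l1 x + (l - l1)%:C *: E0 x.
Proof. by rewrite /pencil rmorphB scalerBl [in RHS]addrC addrA subrK. Qed.

(* Re ((l - w) E0 x - E0 d, x) <= 0 and Cauchy-Schwarz for the form (E0 ., .). *)
Lemma pencil_dissipative l x d :
  w < l -> kerG x -> pencil l x = E0 d -> (l - w) * pE x <= pE d.
Proof.
move=> wl [Dx Gx] Lx.
have := A0_dissipative Dx Gx.
have A0x : A0 x = l%:C *: E0 x - E0 d by rewrite -Lx /pencil opprB addrC subrK.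
have -> : A0 x - w%:C *: E0 x = (l - w)%:C *: E0 x - E0 d.
  by rewrite A0x rmorphB scalerBl addrAC.
rewrite -/(rform ip _ x) (rformBl hf) (rformZl hf) -!Eform_sqr.
have := rform_le hE d x; rewrite -[rform Eform _ _]/(rform ip (E0 d) x) => cs.
have [x0|x_neq0] := eqVneq (pE x) 0; first by rewrite x0 mulr0 hnorm_ge0.
have x_gt0 : 0 < pE x by rewrite lt_def x_neq0 hnorm_ge0.
by move=> le; rewrite -(ler_pM2r x_gt0) -mulrA -expr2; lra.
Qed.

Lemma pencil_inj l x : w < l -> kerG x -> pencil l x = 0 -> x = 0.
Proof.
move=> wl [Dx Gx] Lx.
have := pencil_dissipative wl (conj Dx Gx) (etrans Lx (esym E00)).
rewrite (hnorm0 hE) pmulr_rle0 ?subr_gt0 // => x_le0.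
have /Eform_eq0 E0x : pE x = 0.
  by apply/eqP; rewrite eq_le x_le0 hnorm_ge0.
apply: kernels_trivial => //.
by move: Lx; rewrite /pencil E0x scaler0 sub0r => /eqP; rewrite oppr_eq0 => /eqP.
Qed.

(* Solve pencil l x = z as the fixed point x = T (z - (l - l1) E0 x) with T a right
   inverse of pencil l1; by pencil_dissipative this map contracts the form (E0 ., .). *)
Lemma pencil_surj_near l1 l :
  w < l1 -> pencil_surj l1 -> `|l - l1| < l1 - w -> pencil_surj l.
Proof.
move=> wl1 surj1 near z; have [T T_spec] := choice surj1.
set mu := l - l1; have k_gt0 : 0 < l1 - w by rewrite subr_gt0.
pose g a := T (z - mu%:C *: E0 a).
have g_contr a b : pE (g a - g b) <= `|mu| / (l1 - w) * pE (a - b).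
  have [Ka La] := T_spec (z - mu%:C *: E0 a); have [Kb Lb] := T_spec (z - mu%:C *: E0 b).
  have : pencil l1 (g a - g b) = E0 (mu%:C *: (b - a)).
    rewrite pencilB; [|by case: Ka|by case: Kb].
    by rewrite La Lb E0Z E0B scalerBr subrACA subrr sub0r opprB.
  move/(pencil_dissipative wl1 (kerGB Ka Kb)).
  by rewrite (hnormZ hE) (hdistC hE b) mulrAC ler_pdivlMr // mulrC.
have q1 : `|mu| / (l1 - w) < 1 by rewrite ltr_pdivrMr ?mul1r.
have [y gy] := contraction_fixpoint (hnorm_ge0 _) (hdistC hE) (ler_hdistD hE)
  Eform_geom_complete (divr_ge0 (normr_ge0 mu) (ltW k_gt0)) q1 g_contr.
have /Eform_eq0 := gy; rewrite E0B => /eqP; rewrite subr_eq0 => /eqP E0gy.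
have [Kgy Lgy] := T_spec (z - mu%:C *: E0 y).
by exists (g y); split => //; rewrite (pencil_shift _ l1) Lgy E0gy subrK.
Qed.

Lemma pencil_surj_gt l0 l : w < l0 -> pencil_surj l0 -> w < l -> pencil_surj l.
Proof.
move=> wl0 surj0 wl; set k := l0 - w; have k_gt0 : 0 < k by rewrite subr_gt0.
pose s n := w + (3 / 2) ^+ n * k.
have s_gt n : 0 < (3 / 2 : R) ^+ n * k by rewrite mulr_gt0 ?exprn_gt0 ?divr_gt0.
have surj_s n : pencil_surj (s n).
  elim: n => [|n IH]; first by rewrite /s expr0 mul1r /k addrC subrK.
  apply: pencil_surj_near IH _; first by rewrite /s ltrDl.
  have := s_gt n; rewrite /s exprS -mulrA; set P := _ ^+ n * k.
  by move=> P_gt0; rewrite ger0_norm; lra.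
have [n big] : exists n, l - w < 2 * ((3 / 2) ^+ n * k).
  have c1 : (1 : R) < 3 / 2 by rewrite ltr_pdivlMr // mul1r ltr_nat.
  have [n lt] := exprn_gt ((l - w) / (2 * k)) c1.
  have k2 : 0 < 2 * k by lra.
  by exists n; rewrite mulrCA -ltr_pdivrMr.
apply: (pencil_surj_near (l1 := s n)); [by rewrite /s ltrDl | exact: surj_s |].
rewrite /s ltr_norml; move: big (s_gt n); set P := _ * k => big P_gt0.
by apply/andP; split; lra.
Qed.

Variable ipY : Y -> Y -> R[i].
Hypotheses (hY : is_hilbert ipY) (G_surj : forall y, exists x, D x /\ G x = y)
  (surj_l0 : exists l0 : R, w < l0 /\
     forall z, exists x, [/\ D x, G x = 0 & l0%:C *: E0 x - A0 x = z]).

Definition Epair x : X * Y := (E0 x, 0).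
Definition Apair x : X * Y := (A0 x, G x).

Lemma pencil_pairE (l : R[i]) x : l *: Epair x - Apair x = (l *: E0 x - A0 x, - G x).
Proof.
have -> : l *: Epair x - Apair x = (l *: E0 x - A0 x, l *: 0 - G x) by [].
by rewrite scaler0 sub0r.
Qed.

Lemma resolvent_pairE (l : R[i]) x : Apair x - l *: Epair x = (A0 x - l *: E0 x, G x).
Proof.
have -> : Apair x - l *: Epair x = (A0 x - l *: E0 x, G x - l *: 0) by [].
by rewrite scaler0 subr0.
Qed.

Lemma pencil_surj_all l : w < l -> pencil_surj l.
Proof.
have [l0 [wl0 surj0]] := surj_l0; apply: (pencil_surj_gt wl0) => z.
by have [x [Dx Gx Lx]] := surj0 z; exists x.
Qed.

Lemma in_rho_gt l : w < l -> in_rho D Epair Apair l%:C.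
Proof.
move=> wl; split=> [[z1 z2]|x1 x2 Dx1 Dx2].
  have [x1 [Dx1 Gx1]] := G_surj (- z2).
  have [x0 [[Dx0 Gx0] Lx0]] := pencil_surj_all wl (z1 - pencil l x1).
  exists (x0 + x1); split; first exact: subspaceD.
  rewrite pencil_pairE (linear_onD G_lin) // Gx0 Gx1 add0r opprK.
  by rewrite -/(pencil l (x0 + x1)) pencilD // Lx0 subrK.
rewrite !pencil_pairE => -[L12 G12].
have K12 : kerG (x1 - x2).
  by split; [exact: subspaceB | rewrite (linear_onB G_lin) // -[G x1]opprK G12 opprK subrr].
apply/eqP; rewrite -subr_eq0; apply/eqP/(pencil_inj wl K12).
by rewrite pencilB // /pencil L12 subrr.
Qed.

Lemma resolvent_Eform_le l x v : w < l -> D x ->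
  Apair x - l%:C *: Epair x = Epair v -> (l - w) * pE x <= pE v.
Proof.
move=> wl Dx; rewrite resolvent_pairE => -[A0x Gx].
have : pencil l x = E0 (- v) by rewrite -scaleN1r E0Z scaleN1r -A0x /pencil opprB.
move/(pencil_dissipative wl (conj Dx Gx)).
by rewrite -[- v]sub0r (hdistC hE) subr0.
Qed.

Lemma znorm_Epair x : znorm ip ipY (Epair x) = nX (E0 x).
Proof.
rewrite /znorm /= (hnorm0 (hilbert_pos_herm_form hY)) expr0n /= addr0.
by rewrite sqrtr_sqr ger0_norm ?hnorm_ge0.
Qed.

Lemma left_resolvent_D2 :
  cond_D (znorm ip ipY) (in_rho D Epair Apair) (Rl_graph D Epair Apair) 2.
Proof.
have [k1 [k10 Hk1]] := hnormE0_le_Eform; have [k2 [k20 Hk2]] := Eform_le_hnormE0.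
exists (w + 1), (k1 * k2 + 1); split; first by rewrite ltr_wpDl ?mulr_ge0.
split=> [l wl|l wl _ [_ [_ [v [_ _ ->]]]] _ [x [Dx xv ->]]].
  by apply: in_rho_gt; apply: lt_le_trans wl; rewrite ltrDl.
have wl' : w < l by apply: lt_trans wl; rewrite ltrDl.
rewrite !znorm_Epair; apply: ler_shift_div; rewrite ?hnorm_ge0 ?mulr_ge0 //.
apply: le_trans (_ : (l - w) * (k1 * pE x) <= _); first by rewrite ler_wpM2l ?subr_ge0 ?(ltW wl').
by rewrite mulrCA -mulrA ler_wpM2l // (le_trans (resolvent_Eform_le wl' Dx xv)).
Qed.

Lemma right_resolvent_D1 : (forall x, E0 x = 0 -> x = 0) ->
  cond_D nX (in_rho D Epair Apair) (Rr_graph D Epair Apair) 1.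
Proof.
move=> E0_inj; have [k3 [k30 Hk3]] := hnorm_le_Eform E0_inj.
have [k4 [k40 Hk4]] := Eform_le_hnorm.
exists (w + 1), (k3 * k4 + 1); split; first by rewrite ltr_wpDl ?mulr_ge0.
split=> [l wl|l wl v _ x [Dx xv]].
  by apply: in_rho_gt; apply: lt_le_trans wl; rewrite ltrDl.
have wl' : w < l by apply: lt_trans wl; rewrite ltrDl.
apply: ler_shift_div; rewrite ?hnorm_ge0 ?mulr_ge0 //.
apply: le_trans (_ : (l - w) * (k3 * pE x) <= _); first by rewrite ler_wpM2l ?subr_ge0 ?(ltW wl').
by rewrite mulrCA -mulrA ler_wpM2l // (le_trans (resolvent_Eform_le wl' Dx xv)).
Qed.

End DissipativePencil.
End ClosedRangeNonneg.

Theorem mainTheorem9 (R : realType) (X Y : lmodType R[i])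
  (ipX : X -> X -> R[i]) (ipY : Y -> Y -> R[i])
  (E0 : X -> X) (D : X -> Prop) (A0 : X -> X) (G : X -> Y) (w : R) :
  is_hilbert ipX -> is_hilbert ipY ->
  (* E0 in L(X), self-adjoint, nonnegative, closed range *)
  linear_on (fun _ => True) E0 ->
  (exists c : R, forall x, hnorm ipX (E0 x) <= c * hnorm ipX x) ->
  (forall x y, ipX (E0 x) y = ipX x (E0 y)) ->
  (forall x, 0 <= ipX (E0 x) x) ->
  hclosed ipX (fun y => exists x, E0 x = y) ->
  (* A0 : dom A0 -> X linear *)
  subspace D -> linear_on D A0 ->
  (* Gamma in L(dom A0, Y) (graph norm), surjective *)
  linear_on D G ->
  (exists c : R, forall x, D x ->
     hnorm ipY (G x) <= c * Num.sqrt (hnorm ipX x ^+ 2 + hnorm ipX (A0 x) ^+ 2)) ->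
  (forall y, exists x, D x /\ G x = y) ->
  (* dissipativity on ker Gamma *)
  (forall x, D x -> G x = 0 ->
     complex.Re (ipX (A0 x - w%:C *: E0 x) x) <= 0) ->
  (exists l0 : R, w < l0 /\
     forall z, exists x, [/\ D x, G x = 0 & l0%:C *: E0 x - A0 x = z]) ->
  (forall x, D x -> E0 x = 0 -> A0 x = 0 -> G x = 0 -> x = 0) ->
  let E := fun x : X => (E0 x, 0 : Y) in
  let A := fun x : X => (A0 x, G x) in
  [/\ (forall l : R, w < l -> in_rho D E A l%:C),
      cond_D (znorm ipX ipY) (in_rho D E A) (Rl_graph D E A) 2 &
      ((forall x, E0 x = 0 -> x = 0) ->
        cond_D (hnorm ipX) (in_rho D E A) (Rr_graph D E A) 1)].
Proof.
move=> hX hY E0_lin E0_bnd E0_sym E0_ge0 E0_cl hD A0_lin G_lin _ G_surj diss surj_l0 ker0 E A.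
split.
- exact (in_rho_gt hX E0_lin E0_bnd E0_sym E0_ge0 E0_cl hD A0_lin G_lin diss ker0 G_surj surj_l0).
- exact (left_resolvent_D2 hX E0_lin E0_bnd E0_sym E0_ge0 E0_cl hD A0_lin G_lin diss ker0
          hY G_surj surj_l0).
- exact (right_resolvent_D1 hX E0_lin E0_bnd E0_sym E0_ge0 E0_cl hD A0_lin G_lin diss ker0
          G_surj surj_l0).
Qed.
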